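(* Let $(B,\lfloor\cdot,\cdot\rfloor)$ be an SSD space with quadratic form $q$ and let $A\subset B$ be $q$-positive. Then $\mathcal{P}_q(\Phi_A^{@})$ is the smallest $q$-representable subset of $B$ containing $A$.
   Context: An SSD space is a pair $(B,\lfloor\cdot,\cdot\rfloor)$ with $B$ a nonzero real vector space and $\lfloor\cdot,\cdot\rfloor$ a symmetric bilinear form; $q(b)=\frac12\lfloor b,b\rfloor$. $w(B,B)$ is the coarsest topology on $B$ making all maps $b\mapsto\lfloor b,c\rfloor$ continuous. A nonempty $A\subset B$ is $q$-positive if $q(b-c)\ge0$ for all $b,c\in A$. $\Phi_A(x)=\sup_{a\in A}\{\lfloor x,a\rfloor-q(a)\}$. For proper convex $f$, $f^{@}(b)=\sup_{c\in B}\{\lfloor c,b\rfloor-f(c)\}$ and $\mathcal{P}_q(f)=\{b: f(b)=q(b)\}$. A $q$-positive set $A$ is $q$-representable if there is a $w(B,B)$-lower semicontinuous proper convex $f:B\to\mathbb{R}\cup\{+\infty\}$ with $f\ge q$ on $B$ and $\mathcal{P}_q(f)=A$. *)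

From mathcomp Require Import all_boot all_order all_algebra.
From mathcomp Require Import classical_sets reals constructive_ereal ereal.
Set Implicit Arguments. Unset Strict Implicit. Unset Printing Implicit Defensive.
Import Order.TTheory GRing.Theory Num.Theory.
Local Open Scope classical_set_scope.
Local Open Scope ring_scope.

Section SSD.
Variables (R : realType) (B : lmodType R) (bf : B -> B -> R).

Definition symmetric_bilinear : Prop :=
  (forall b c, bf b c = bf c b) /\
  (forall (a : R) (x y z : B), bf (a *: x + y) z = a * bf x z + bf y z).

Definition SSD_space : Prop := (exists b : B, b != 0) /\ symmetric_bilinear.

Definition qf (b : B) : R := bf b b / 2.

(* open sets of w(B,B): the initial topology of the maps b |-> bf b c,
   written out via its neighbourhood base *)
Definition wopen (U : set B) : Prop :=
  forall x, U x -> exists (s : seq B) (e : R), 0 < e /\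
    [set y | forall c, c \in s -> `|bf (y - x) c| < e] `<=` U.
Definition wclosed (S : set B) : Prop := wopen (~` S).

Definition wlsc (f : B -> \bar R) : Prop :=
  forall r : R, wclosed [set x | (f x <= r%:E)%E].

Definition proper_fun (f : B -> \bar R) : Prop :=
  (forall x, f x != -oo%E) /\ (exists x, (f x < +oo)%E).

Definition convex_fun (f : B -> \bar R) : Prop :=
  forall (x y : B) (t : R), 0 < t < 1 ->
    (f (t *: x + (1 - t) *: y)%R <= t%:E * f x + (1 - t)%:E * f y)%E.

Definition q_positive (A : set B) : Prop :=
  A !=set0 /\ forall b c, A b -> A c -> 0 <= qf (b - c).

Definition PhiA (A : set B) (x : B) : \bar R :=
  ereal_sup [set ((bf x a) - qf a)%:E | a in A].

Definition conj_at (f : B -> \bar R) (b : B) : \bar R :=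
  ereal_sup [set ((bf c b)%:E - f c)%E | c in [set: B]].

Definition Pq (f : B -> \bar R) : set B := [set b | f b = (qf b)%:E].

Definition q_representable (A : set B) : Prop :=
  q_positive A /\
  exists f : B -> \bar R, [/\ wlsc f, proper_fun f, convex_fun f,
    (forall b, ((qf b)%:E <= f b)%E) & Pq f = A].

End SSD.

(* Write F for the conjugate of Phi_A.  q-positivity of A gives Phi_A = q on A.
   F is a supremum of w(B,B)-continuous affine functions, hence w(B,B)-lsc and
   convex; F >= Phi_A (test with c in A) and F(b) >= [b,b] - Phi_A(b), so
   F >= max(Phi_A, 2q - Phi_A) >= q, with equality on A.  Thus P_q(F) is
   q-representable and contains A.
   Minimality: let f represent C containing A, and suppose q(b) < f(b).
   Separating (b, q(b)) from the closed convex epigraph of f yields an affine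
   minorant y |-> [y,c] - al of f with q(b) < [b,c] - al.  On A it gives
   [a,c] - q(a) <= al, i.e. Phi_A(c) <= al, hence F(b) >= [c,b] - Phi_A(c) > q(b)
   and b is not in P_q(F).  The separation only involves the finitely many
   functionals defining a weak neighbourhood of b, so it reduces to the
   Hahn-Banach theorem in R^n, proved one coordinate at a time and applied to
   a Minkowski-type gauge. *)

From mathcomp Require Import all_boot all_order all_algebra.
From mathcomp Require Import boolp classical_sets functions reals constructive_ereal ereal.
From mathcomp Require Import ring lra.
Set Implicit Arguments. Unset Strict Implicit. Unset Printing Implicit Defensive.
Import Order.TTheory GRing.Theory Num.Theory.
Local Open Scope classical_set_scope.
Local Open Scope ring_scope.

Section RealInf.
Variable R : realType.
Implicit Types (E F G : set R).

Lemma inf_le E L x : (forall y, E y -> L <= y) -> E x -> inf E <= x.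
Proof. by move=> EL Ex; apply: ge_inf Ex; exists L. Qed.

Lemma le_inf E M x : E x -> (forall y, E y -> M <= y) -> M <= inf E.
Proof. by move=> Ex EM; apply: lb_le_inf => //; exists x. Qed.

Lemma inf_le_add E F G x y : E x -> F y ->
  (forall u v, E u -> F v -> inf G <= u + v) -> inf G <= inf E + inf F.
Proof.
move=> Ex Fy GEF; rewrite -lerBlDl; apply: (le_inf Fy) => v Fv.
rewrite lerBlDl -lerBlDr; apply: (le_inf Ex) => u Eu.
by rewrite lerBlDr GEF.
Qed.

End RealInf.

Section FiniteDimensional.
Variable R : realType.
(* Points of R^m are sequences nat -> R; a functional on R^m is one that
   satisfies [depends_on_first m]. *)
Local Notation vec := (nat -> R).
Implicit Types (z : vec) (p : vec -> R).

Definition dot m (l z : vec) : R := \sum_(i < m) l i * z i.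

Definition norm1 m z : R := \sum_(i < m) `|z i|.

Definition depends_on_first m p :=
  forall z z', (forall i, (i < m)%N -> z i = z' i) -> p z = p z'.

Definition sublinear p := [/\ forall z1 z2, p (z1 + z2) <= p z1 + p z2,
  forall t z, 0 < t -> p (t \*o z) <= t * p z & p 0 = 0].

Lemma sublinear_homE p t z : sublinear p -> 0 < t -> p (t \*o z) = t * p z.
Proof.
move=> [_ hom _] t0; apply/eqP; rewrite eq_le hom //=.
have := hom t^-1 (t \*o z); rewrite invr_gt0 => /(_ t0).
have -> : t^-1 \*o (t \*o z) = z by apply/funext => i /=; rewrite mulKf ?gt_eqF.
by move/(ler_wpM2l (ltW t0)); rewrite mulrA mulfV ?gt_eqF // mul1r.
Qed.

Lemma dotN m l z : dot m l (- z) = - dot m l z.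
Proof. by rewrite /dot -sumrN; apply: eq_bigr => i _; rewrite fctE mulrN. Qed.

Lemma norm1D m z1 z2 : norm1 m (z1 + z2) <= norm1 m z1 + norm1 m z2.
Proof. by rewrite -big_split; apply: ler_sum => i _; rewrite fctE ler_normD. Qed.

Lemma norm1Z m t z : norm1 m (t \*o z) = `|t| * norm1 m z.
Proof. by rewrite /norm1 mulr_sumr; apply: eq_bigr => i _; rewrite normrM. Qed.

Lemma norm1N m z : norm1 m (- z) = norm1 m z.
Proof. by apply: eq_bigr => i _; rewrite fctE normrN. Qed.

Lemma norm1_0 m : norm1 m 0 = 0.
Proof. by rewrite /norm1 big1 // => i _; rewrite normr0. Qed.

Lemma norm1_ge m z i : (i < m)%N -> `|z i| <= norm1 m z.
Proof.
move=> im; rewrite /norm1 (bigD1 (Ordinal im)) //= lerDl.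
exact: sumr_ge0.
Qed.

Lemma norm1_depends m : depends_on_first m (norm1 m).
Proof. by move=> z z' zz'; apply: eq_bigr => i _; rewrite zz'. Qed.

Section DropCoordinate.
Variables (m : nat) (p : vec -> R).
Hypotheses (p_sub : sublinear p) (p_dep : depends_on_first m.+1 p).

Let upd z t : vec := fun i => if i == m then t else z i.
Let a := p (upd 0 1).

Let updD z1 z2 t1 t2 : upd (z1 + z2) (t1 + t2) = upd z1 t1 + upd z2 t2.
Proof. by apply/funext => i; rewrite /upd !fctE; case: (i == m). Qed.

Let updZ t z u : upd (t \*o z) (t * u) = t \*o upd z u.
Proof. by apply/funext => i; rewrite /upd /=; case: (i == m). Qed.

Let upd_id z : upd z (z m) = z.
Proof. by apply/funext => i; rewrite /upd; case: eqP => [->|]. Qed.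

Let p_axis_ge t : a * t <= p (upd 0 t).
Proof.
have [sub _ p0] := p_sub.
have [t_lt0|t_gt0|->] := ltgtP t 0; last by rewrite mulr0 (upd_id 0) p0.
- have := sub (upd 0 1) (upd 0 (-1)).
  rewrite -updD addr0 subrr (upd_id 0) p0 -/a.
  have -> : upd 0 t = (- t) \*o upd 0 (-1).
    by rewrite -updZ mulrN mulr1 opprK; congr upd; apply/funext => i; rewrite /= mulr0.
  rewrite sublinear_homE ?oppr_gt0 //; nra.
- have -> : upd 0 t = t \*o upd 0 1.
    by rewrite -updZ mulr1; congr upd; apply/funext => i; rewrite /= mulr0.
  by rewrite sublinear_homE // mulrC.
Qed.

(* The one-dimensional extension step, with the extension taking the value
   a = p(e_m) on the m-th unit vector. *)
Let q z := inf (range (fun t => p (upd z t) - a * t)).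

Let q_le z t : q z <= p (upd z t) - a * t.
Proof.
apply: (@inf_le _ _ (- p (upd (- z) 0))); last exact: imageT.
move=> _ [u _ <-]; have [sub _ _] := p_sub.
have := sub (upd z u) (upd (- z) 0); rewrite -updD subrr addr0.
have := p_axis_ge u; lra.
Qed.

Let le_q z L : (forall t, L <= p (upd z t) - a * t) -> L <= q z.
Proof. by move=> Lq; apply: le_inf (imageT _ 0) _ => _ [t _ <-]. Qed.

Let q_sublinear : sublinear q.
Proof.
have [sub _ p0] := p_sub.
split.
- move=> z1 z2; apply: (inf_le_add (imageT _ 0) (imageT _ 0)) => _ _ [t1 _ <-] [t2 _ <-].
  have := q_le (z1 + z2) (t1 + t2); rewrite updD.
  have := sub (upd z1 t1) (upd z2 t2); lra.
- move=> t z t0; rewrite -ler_pdivrMl //; apply: le_q => u.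
  rewrite ler_pdivrMl //.
  have := q_le (t \*o z) (t * u); rewrite updZ (sublinear_homE _ p_sub t0); nra.
- apply/eqP; rewrite eq_le; apply/andP; split.
    by have := q_le 0 0; rewrite (upd_id 0) p0 mulr0 subr0.
  by apply: le_q => t; have := p_axis_ge t; lra.
Qed.

Let q_depends : depends_on_first m q.
Proof.
move=> z z' zz'; rewrite /q.
suff -> : (fun t => p (upd z t) - a * t) = (fun t => p (upd z' t) - a * t) by [].
apply/funext => t; congr (_ - _); apply: p_dep => i im.
rewrite /upd; case: eqP => // /eqP im'.
by apply: zz'; rewrite ltn_neqAle im' -ltnS.
Qed.

Lemma drop_last_coord : exists a (q : vec -> R),
  [/\ sublinear q, depends_on_first m q & forall z, q z + a * z m <= p z].
Proof.
exists a, q; split => // z.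
by have := q_le z (z m); rewrite upd_id; lra.
Qed.

End DropCoordinate.

Lemma sublinear_ge_linear m p : sublinear p -> depends_on_first m p ->
  exists l, forall z, dot m l z <= p z.
Proof.
elim: m p => [|m IH] p p_sub p_dep.
  have [_ _ p0] := p_sub.
  by exists 0 => z; rewrite /dot big_ord0 (p_dep z 0) // p0.
have [a [q [q_sub q_dep qp]]] := drop_last_coord p_sub p_dep.
have [l lq] := IH q q_sub q_dep.
exists (fun i => if i == m then a else l i) => z.
rewrite /dot big_ord_recr /= eqxx; apply: le_trans (qp z); rewrite lerD2r.
under eq_bigr => i _ do rewrite (ltn_eqF (ltn_ord i)).
exact: lq.
Qed.

Lemma convex_weight (s1 s2 : R) : 0 <= s1 -> 0 <= s2 ->
  let t := s1 / (s1 + s2) in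
  0 <= t <= 1 /\ forall x1 x2, (s1 + s2) * (t * x1 + (1 - t) * x2) = s1 * x1 + s2 * x2.
Proof.
move=> s1_ge0 s2_ge0 t; rewrite {}/t.
have [s12_0|s12_neq0] := eqVneq (s1 + s2) 0.
  have [-> ->] : s1 = 0 /\ s2 = 0 by split; lra.
  by rewrite mul0r; split=> [|x1 x2]; rewrite ?lexx ?ler01 // add0r !mul0r addr0.
have s12 : 0 < s1 + s2 by rewrite lt_neqAle eq_sym s12_neq0 addr_ge0.
split; first by rewrite divr_ge0 ?addr_ge0 //= ler_pdivrMr // mul1r lerDl.
by move=> x1 x2; field; rewrite gt_eqF.
Qed.

Section SeparationFromOrigin.
Variables (m : nat) (K : set vec) (e : R) (k0 : vec).
Hypotheses (e_gt0 : 0 < e) (Kk0 : K k0).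
Hypothesis K_convex : forall k1 k2 t, K k1 -> K k2 -> 0 <= t <= 1 ->
  K (t \*o k1 + (1 - t) \*o k2).
Hypothesis K_far : forall k, K k -> e <= norm1 m k.

Let e_inv_ge0 : 0 <= e^-1. Proof. by rewrite invr_ge0 ltW. Qed.

(* A Minkowski-type gauge of K: it is at most -1 at every -k with k in K. *)
Let gauge_vals z :=
  [set e^-1 * norm1 m (z + s \*o k) - s | s in [set s | 0 <= s] & k in K].
Let gauge z := inf (gauge_vals z).

Let gauge_vals0 z : gauge_vals z (e^-1 * norm1 m (z + 0 \*o k0) - 0).
Proof. by exists 0; [exact: lexx | exists k0]. Qed.

Let gauge_lb z s k : 0 <= s -> K k ->
  - (e^-1 * norm1 m z) <= e^-1 * norm1 m (z + s \*o k) - s.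
Proof.
move=> s_ge0 Kk.
have sk : s * e <= norm1 m (z + s \*o k) + norm1 m z.
  have := norm1D m (z + s \*o k) (- z).
  have -> : z + s \*o k + - z = s \*o k by apply/funext => i; rewrite !fctE /=; ring.
  rewrite norm1N norm1Z ger0_norm //; apply: le_trans.
  exact: ler_wpM2l (K_far Kk).
have ee : e^-1 * e = 1 by rewrite mulVf ?gt_eqF.
by have := e_inv_ge0; nra.
Qed.

Let gauge_le z s k : 0 <= s -> K k -> gauge z <= e^-1 * norm1 m (z + s \*o k) - s.
Proof.
move=> s_ge0 Kk; apply: (@inf_le _ _ (- (e^-1 * norm1 m z))).
  by move=> _ [s' s'_ge0 [k' Kk' <-]]; exact: gauge_lb.
by exists s => //; exists k.
Qed.

Let le_gauge z L : (forall s k, 0 <= s -> K k -> L <= e^-1 * norm1 m (z + s \*o k) - s) ->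
  L <= gauge z.
Proof.
move=> Lg; apply: le_inf (gauge_vals0 z) _.
by move=> _ [s s_ge0 [k Kk <-]]; exact: Lg.
Qed.

Let gauge_sublinear : sublinear gauge.
Proof.
split.
- move=> z1 z2; apply: (inf_le_add (gauge_vals0 z1) (gauge_vals0 z2)).
  move=> _ _ [s1 s1_ge0 [k1 Kk1 <-]] [s2 s2_ge0 [k2 Kk2 <-]].
  have [t01 tE] := convex_weight s1_ge0 s2_ge0.
  set t := s1 / (s1 + s2) in t01 tE.
  have := gauge_le (z1 + z2) (addr_ge0 s1_ge0 s2_ge0) (K_convex Kk1 Kk2 t01).
  have -> : z1 + z2 + (s1 + s2) \*o (t \*o k1 + (1 - t) \*o k2)
      = (z1 + s1 \*o k1) + (z2 + s2 \*o k2).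
    by apply/funext => i; rewrite !fctE /= tE; ring.
  have := ler_wpM2l e_inv_ge0 (norm1D m (z1 + s1 \*o k1) (z2 + s2 \*o k2)).
  lra.
- move=> t z t0; rewrite -ler_pdivrMl //; apply: le_gauge => s k s_ge0 Kk.
  rewrite ler_pdivrMl //.
  have := gauge_le (t \*o z) (mulr_ge0 (ltW t0) s_ge0) Kk.
  have -> : t \*o z + (t * s) \*o k = t \*o (z + s \*o k).
    by apply/funext => i; rewrite !fctE /=; ring.
  rewrite norm1Z gtr0_norm //; lra.
- apply/eqP; rewrite eq_le; apply/andP; split.
    have := gauge_le 0 (lexx 0) Kk0.
    have -> : 0 + 0 \*o k0 = 0 by apply/funext => i; rewrite !fctE /= mul0r addr0.
    by rewrite norm1_0 mulr0 subr0.
  apply: le_gauge => s k s_ge0 Kk.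
  by have := gauge_lb 0 s_ge0 Kk; rewrite norm1_0 mulr0 oppr0.
Qed.

Let gauge_depends : depends_on_first m gauge.
Proof.
move=> z z' zz'; rewrite /gauge /gauge_vals.
suff -> : (fun s k => e^-1 * norm1 m (z + s \*o k) - s)
  = (fun s k => e^-1 * norm1 m (z' + s \*o k) - s) by [].
apply/funext => s; apply/funext => k; congr (_ * _ - _).
by apply: norm1_depends => i im; rewrite !fctE /= zz'.
Qed.

Lemma convex_separated_from_origin : exists l, forall k, K k -> 1 <= dot m l k.
Proof.
have [l lg] := sublinear_ge_linear gauge_sublinear gauge_depends.
exists l => k Kk.
have := le_trans (lg (- k)) (gauge_le (- k) ler01 Kk).
have -> : - k + 1 \*o k = 0 by apply/funext => i; rewrite !fctE /= mul1r addNr.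
by rewrite norm1_0 mulr0 dotN; lra.
Qed.

End SeparationFromOrigin.

End FiniteDimensional.

Section ExtendedReals.
Variable R : realType.
Local Open Scope ereal_scope.

Lemma lte_fin_gap (s : R) (x : \bar R) : s%:E < x -> exists2 s' : R, (s < s')%R & s'%:E < x.
Proof.
case: x => [x| |] //; rewrite ?lte_fin => sx.
  by exists ((s + x) / 2)%R; rewrite ?lte_fin; lra.
by exists (s + 1)%R; rewrite ?ltry //; lra.
Qed.

Lemma fin_le_of_upper (v : R) (x : \bar R) : x != -oo ->
  (forall r : R, x <= r%:E -> (v <= r)%R) -> v%:E <= x.
Proof. by case: x => [x| |] // _ vx; rewrite ?leey // lee_fin vx. Qed.

End ExtendedReals.

Section SSDSpace.
Variables (R : realType) (B : lmodType R) (bf : B -> B -> R).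
Hypothesis bf_sym : symmetric_bilinear bf.
Local Notation q := (qf bf).

Lemma bfC x y : bf x y = bf y x. Proof. exact: bf_sym.1. Qed.

Lemma bf0l z : bf 0 z = 0.
Proof. by have := bf_sym.2 1 0 0 z; rewrite scale1r addr0 mul1r => h; lra. Qed.

Lemma bfDl x y z : bf (x + y) z = bf x z + bf y z.
Proof. by rewrite -{1}(scale1r x) bf_sym.2 mul1r. Qed.

Lemma bfZl a x z : bf (a *: x) z = a * bf x z.
Proof. by rewrite -(addr0 (a *: x)) bf_sym.2 bf0l addr0. Qed.

Lemma bfBl x y z : bf (x - y) z = bf x z - bf y z.
Proof. by rewrite bfDl -scaleN1r bfZl mulN1r. Qed.

Lemma bf0r x : bf x 0 = 0. Proof. by rewrite bfC bf0l. Qed.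
Lemma bfDr x y z : bf x (y + z) = bf x y + bf x z. Proof. by rewrite !(bfC x) bfDl. Qed.
Lemma bfZr a x z : bf x (a *: z) = a * bf x z. Proof. by rewrite !(bfC x) bfZl. Qed.
Lemma bfBr x y z : bf x (y - z) = bf x y - bf x z. Proof. by rewrite !(bfC x) bfBl. Qed.

Lemma bf_sumr x (I : Type) (r : seq I) (P : pred I) (F : I -> B) :
  bf x (\sum_(i <- r | P i) F i) = \sum_(i <- r | P i) bf x (F i).
Proof. exact: (big_morph _ (bfDr x) (bf0r x)). Qed.

Lemma qfB b a : q (b - a) = q b - bf b a + q a.
Proof. by rewrite /qf bfBl !bfBr (bfC a b); field. Qed.

Lemma convex_fun_epi (g : B -> \bar R) y1 y2 (r1 r2 t : R) : convex_fun g ->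
  (g y1 <= r1%:E)%E -> (g y2 <= r2%:E)%E -> 0 <= t <= 1 ->
  (g (t *: y1 + (1 - t) *: y2)%R <= (t * r1 + (1 - t) * r2)%:E)%E.
Proof.
move=> g_cvx gy1 gy2 /andP[t_ge0 t_le1].
have [t0|t_gt0] := eqVneq t 0; first by rewrite t0 subr0 scale0r add0r scale1r mul0r add0r mul1r.
have [t1|t_lt1] := eqVneq t 1; first by rewrite t1 subrr scale0r addr0 scale1r mul0r addr0 mul1r.
have t01 : 0 < t < 1 by rewrite !lt_neqAle eq_sym t_gt0 t_ge0 t_lt1 t_le1.
apply: le_trans (g_cvx _ _ _ t01) _; rewrite (EFinD (t * r1)).
by apply: leeD; rewrite EFinM; apply: lee_wpmul2l; rewrite // lee_fin subr_ge0.
Qed.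

Definition affine_minorant (g : B -> \bar R) (c : B) (al : R) :=
  forall y, ((bf y c - al)%:E <= g y)%E.

Lemma wlsc_sublevel_far (g : B -> \bar R) b (s : R) : wlsc bf g -> (s%:E < g b)%E ->
  exists (sq : seq B) (e : R), 0 < e /\
    forall y, (g y <= s%:E)%E -> exists2 c, c \in sq & e <= `|bf (y - b) c|.
Proof.
move=> g_wlsc sgb.
have b_out : (~` [set x | (g x <= s%:E)%E]) b by rewrite /= leNgt sgb.
have [sq [e [e_gt0 nbhd]]] := g_wlsc s b b_out.
exists sq, e; split => // y gy.
have /existsNP [c /not_implyP [csq /negP]] :
    ~ (forall c, c \in sq -> `|bf (y - b) c| < e) by move/nbhd.
by rewrite -leNgt; exists c.
Qed.

Definition epi_coords b (sq : seq B) (s : R) (y : B) (r : R) : nat -> R :=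
  fun i => if (i < size sq)%N then bf (y - b) (nth 0 sq i) else r - s.

Lemma epi_coords_convex b sq s y1 y2 r1 r2 t :
  t \*o epi_coords b sq s y1 r1 + (1 - t) \*o epi_coords b sq s y2 r2
  = epi_coords b sq s (t *: y1 + (1 - t) *: y2) (t * r1 + (1 - t) * r2).
Proof.
apply/funext => i; rewrite /epi_coords !fctE /=.
by case: ifP => _; rewrite ?bfBl ?bfDl ?bfZl; ring.
Qed.

Lemma dot_epi_coords b sq s y r (l : nat -> R) :
  dot (size sq).+1 l (epi_coords b sq s y r)
  = bf (y - b) (\sum_(i < size sq) l i *: nth 0 sq i) + l (size sq) * (r - s).
Proof.
rewrite /dot big_ord_recr /= /epi_coords ltnn bf_sumr; congr (_ + _).
by apply: eq_bigr => i _; rewrite ltn_ord bfZr.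
Qed.

Lemma epi_coords_far (g : B -> \bar R) b sq (s s' e : R) y r :
  (forall y, (g y <= s'%:E)%E -> exists2 c, c \in sq & e <= `|bf (y - b) c|) ->
  (g y <= r%:E)%E -> Num.min e (s' - s) <= norm1 (size sq).+1 (epi_coords b sq s y r).
Proof.
move=> far gy; have [s'r|rs'] := leP s' r.
  apply: le_trans (norm1_ge _ (ltnSn (size sq))); rewrite /epi_coords ltnn.
  by rewrite ge_min; apply/orP; right; apply: le_trans (ler_norm _); lra.
have [c csq ec] : exists2 c, c \in sq & e <= `|bf (y - b) c|.
  by apply: far; apply: le_trans gy _; rewrite lee_fin ltW.
have ic : (index c sq < (size sq).+1)%N by rewrite ltnS ltnW // index_mem.
apply: le_trans (norm1_ge _ ic).
by rewrite /epi_coords index_mem csq nth_index // ge_min ec.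
Qed.

Lemma proper_fun_fin (g : B -> \bar R) : proper_fun g -> exists y (r : R), g y = r%:E.
Proof.
move=> [g_ninf [y]]; case E: (g y) => [r| |] //; first by exists y, r.
by have := g_ninf y; rewrite E.
Qed.

Lemma epigraph_separation (g : B -> \bar R) b (s : R) :
  wlsc bf g -> convex_fun g -> proper_fun g -> (s%:E < g b)%E ->
  exists c (mu : R), forall y (r : R), (g y <= r%:E)%E -> 1 <= bf (y - b) c + mu * (r - s).
Proof.
move=> g_wlsc g_cvx g_prop sgb.
have [s' ss' s'gb] := lte_fin_gap sgb.
have [sq [e [e_gt0 far]]] := wlsc_sublevel_far g_wlsc s'gb.
pose K := [set z | exists y (r : R), (g y <= r%:E)%E /\ z = epi_coords b sq s y r].
have [y0 [r0 gy0]] := proper_fun_fin g_prop.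
have K0 : K (epi_coords b sq s y0 r0) by exists y0, r0; rewrite gy0.
have K_convex k1 k2 t : K k1 -> K k2 -> 0 <= t <= 1 -> K (t \*o k1 + (1 - t) \*o k2).
  move=> [y1 [r1 [gy1 ->]]] [y2 [r2 [gy2 ->]]] t01.
  rewrite epi_coords_convex; exists (t *: y1 + (1 - t) *: y2), (t * r1 + (1 - t) * r2).
  by split => //; exact: convex_fun_epi.
have K_far k : K k -> Num.min e (s' - s) <= norm1 (size sq).+1 k.
  by move=> [y [r [gy ->]]]; exact: epi_coords_far far gy.
have e'_gt0 : 0 < Num.min e (s' - s) by rewrite lt_min e_gt0 subr_gt0.
have [l sep] := convex_separated_from_origin e'_gt0 K0 K_convex K_far.
exists (\sum_(i < size sq) l i *: nth 0 sq i), (l (size sq)) => y r gy.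
by rewrite -dot_epi_coords; apply: sep; exists y, r.
Qed.

Lemma separation_slope_ge0 (g : B -> \bar R) b (s : R) c mu : proper_fun g ->
  (forall y (r : R), (g y <= r%:E)%E -> 1 <= bf (y - b) c + mu * (r - s)) -> 0 <= mu.
Proof.
move=> g_prop sep; have [y0 [r0 gy0]] := proper_fun_fin g_prop.
rewrite leNgt; apply/negP => mu_lt0.
pose X := bf (y0 - b) c + mu * (r0 - s).
pose T := (`|X| + 1) / - mu.
have T_ge0 : 0 <= T by rewrite divr_ge0 ?addr_ge0 // oppr_ge0 ltW.
have muT : mu * T = - (`|X| + 1) by rewrite /T; field; rewrite lt_eqF.
have := sep y0 (r0 + T); rewrite gy0 lee_fin lerDl => /(_ T_ge0).
have := ler_norm X; rewrite /X; lra.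
Qed.

Lemma affine_minorant_of_separation (g : B -> \bar R) b (s : R) c mu :
  (forall x, g x != -oo%E) -> 0 < mu ->
  (forall y (r : R), (g y <= r%:E)%E -> 1 <= bf (y - b) c + mu * (r - s)) ->
  exists c' al, affine_minorant g c' al /\ s < bf b c' - al.
Proof.
move=> g_ninf mu_gt0 sep.
have mu_inv_gt0 : 0 < mu^-1 by rewrite invr_gt0.
exists ((- mu^-1) *: c), (- (s + mu^-1 * (1 + bf b c))); split; last first.
  by rewrite bfZr; lra.
move=> y; apply: fin_le_of_upper => // r gy.
have := sep y r gy; rewrite -lerBlDl => /(ler_wpM2l (ltW mu_inv_gt0)).
by rewrite mulKf ?gt_eqF // bfZr bfBl; lra.
Qed.

Lemma affine_minorant_of_vertical (g : B -> \bar R) b (s : R) c c1 al1 :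
  affine_minorant g c1 al1 ->
  (forall y (r : R), (g y <= r%:E)%E -> 1 <= bf (y - b) c) ->
  exists c' al, affine_minorant g c' al /\ s < bf b c' - al.
Proof.
move=> minor1 vert.
pose k := Num.max 0 (s - (bf b c1 - al1)) + 1.
have k_ge0 : 0 <= k by rewrite /k addr_ge0 ?le_max ?lexx.
have s_lt : s - (bf b c1 - al1) < k by rewrite /k ltr_pwDr // le_max lexx orbT.
exists (c1 - k *: c), (al1 - k - k * bf b c); split; last by rewrite bfBr bfZr; lra.
move=> y; apply: fin_le_of_upper => [|r gy]; first by case: (g y) (minor1 y).
have : bf y c1 - al1 <= r by rewrite -lee_fin (le_trans (minor1 y) gy).
have := vert y r gy; rewrite bfBl bfBr bfZr => ? ?.
have : 0 <= k * (bf y c - bf b c - 1) by rewrite mulr_ge0 // subr_ge0.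
lra.
Qed.

Lemma exists_affine_minorant (g : B -> \bar R) :
  wlsc bf g -> convex_fun g -> proper_fun g -> exists c al, affine_minorant g c al.
Proof.
move=> g_wlsc g_cvx g_prop; have [y0 [r0 gy0]] := proper_fun_fin g_prop.
have r0_gap : ((r0 - 1)%:E < g y0)%E by rewrite gy0 lte_fin; lra.
have [c [mu sep]] := epigraph_separation g_wlsc g_cvx g_prop r0_gap.
have mu_gt0 : 0 < mu.
  by have := sep y0 r0; rewrite gy0 lexx subrr bf0l add0r => /(_ isT); lra.
have [c' [al [minor _]]] := affine_minorant_of_separation g_prop.1 mu_gt0 sep.
by exists c', al.
Qed.

Lemma lsc_convex_affine_minorant (g : B -> \bar R) b (s : R) :
  wlsc bf g -> convex_fun g -> proper_fun g -> (s%:E < g b)%E ->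
  exists c al, affine_minorant g c al /\ s < bf b c - al.
Proof.
move=> g_wlsc g_cvx g_prop sgb.
have [c [mu sep]] := epigraph_separation g_wlsc g_cvx g_prop sgb.
have [mu0|mu_neq0] := eqVneq mu 0; last first.
  have mu_gt0 : 0 < mu by rewrite lt_neqAle eq_sym mu_neq0 (separation_slope_ge0 g_prop sep).
  exact: affine_minorant_of_separation g_prop.1 mu_gt0 sep.
(* A vertical separating hyperplane is tilted by some affine minorant. *)
have [c1 [al1 minor1]] := exists_affine_minorant g_wlsc g_cvx g_prop.
apply: (@affine_minorant_of_vertical _ _ s c _ _ minor1) => y r gy.
by have := sep y r gy; rewrite mu0 mul0r addr0.
Qed.

Lemma Pq_q_positive (g : B -> \bar R) : convex_fun g -> (forall b, ((q b)%:E <= g b)%E) ->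
  Pq bf g !=set0 -> q_positive bf (Pq bf g).
Proof.
move=> g_cvx g_ge_q Pq_g0; split => // b c gb gc.
have half : ((0 : R) < 1 / 2) && (1 / 2 < 1 :> R) by apply/andP; split; lra.
have := le_trans (g_ge_q _) (g_cvx b c _ half); rewrite gb gc -!EFinM -EFinD lee_fin.
rewrite qfB /qf bfDl !bfDr !bfZl !bfZr (bfC c b); lra.
Qed.

Lemma conj_ge (f : B -> \bar R) c b : ((bf c b)%:E - f c <= conj_at bf f b)%E.
Proof. by apply: ereal_sup_ubound; exists c. Qed.

Lemma conj_convex (f : B -> \bar R) : (forall c, f c != -oo%E) -> convex_fun (conj_at bf f).
Proof.
move=> f_ninf x y t /andP[t_gt0 t_lt1]; apply: ge_ereal_sup => _ [c _ <-].
case E: (f c) (f_ninf c) => [r| |] // _; last by rewrite leNye.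
have := conj_ge f c x; have := conj_ge f c y; rewrite E -!EFinB => gy gx.
have -> : ((bf c (t *: x + (1 - t) *: y)%R - r)%:E
    = t%:E * (bf c x - r)%:E + (1 - t)%:E * (bf c y - r)%:E)%E.
  by rewrite -!EFinM -EFinD bfDr !bfZr; congr (_%:E); ring.
by apply: leeD; apply: lee_wpmul2l => //; rewrite lee_fin ?subr_ge0 ltW.
Qed.

Lemma conj_wlsc (f : B -> \bar R) : (forall c, f c != -oo%E) -> wlsc bf (conj_at bf f).
Proof.
move=> f_ninf r x /= /negP; rewrite -ltNge => /ereal_sup_gt [_ [c _ <-]].
case E: (f c) (f_ninf c) => [p| |] // _.
rewrite -EFinB lte_fin => rx.
exists [:: c], (bf c x - p - r); split; first by lra.
move=> y /(_ c (mem_head _ _)); rewrite bfBl ltr_norml (bfC x c) => /andP[yx _] Fy.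
by have := le_trans (conj_ge f c y) Fy; rewrite E -EFinB lee_fin (bfC c y); lra.
Qed.

Section PhiA.
Variable A : set B.
Hypothesis A_qpos : q_positive bf A.
Local Notation F := (conj_at bf (PhiA bf A)).

Lemma PhiA_ge x a : A a -> ((bf x a - q a)%:E <= PhiA bf A x)%E.
Proof. by move=> Aa; apply: ereal_sup_ubound; exists a. Qed.

Lemma PhiA_ninf x : PhiA bf A x != -oo%E.
Proof. by have [a Aa] := A_qpos.1; case: (PhiA bf A x) (PhiA_ge x Aa). Qed.

Lemma PhiA_on a : A a -> PhiA bf A a = (q a)%:E.
Proof.
move=> Aa; apply/eqP; rewrite eq_le; apply/andP; split.
  apply: ge_ereal_sup => _ [a' Aa' <-]; rewrite lee_fin.
  by have := A_qpos.2 a a' Aa Aa'; rewrite qfB; lra.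
by apply: le_trans (PhiA_ge a Aa); rewrite lee_fin /qf; lra.
Qed.

Lemma conj_PhiA_ge_q b : ((q b)%:E <= F b)%E.
Proof.
have Phi_b : (PhiA bf A b <= F b)%E.
  by apply: ge_ereal_sup => _ [a Aa <-]; rewrite EFinB -(PhiA_on Aa) bfC; exact: conj_ge.
have := conj_ge (PhiA bf A) b b.
case: (PhiA bf A b) Phi_b (PhiA_ninf b) => [r| |] // Phi_b _ bb; last first.
  by apply: le_trans Phi_b; rewrite leey.
have [qr|rq] := leP (q b) r; first by apply: le_trans Phi_b; rewrite lee_fin.
by apply: le_trans bb; rewrite -EFinB lee_fin /qf in rq *; lra.
Qed.

Lemma conj_PhiA_on a : A a -> F a = (q a)%:E.
Proof.
move=> Aa; apply/eqP; rewrite eq_le conj_PhiA_ge_q andbT.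
apply: ge_ereal_sup => _ [c _ <-].
case: (PhiA bf A c) (PhiA_ge c Aa) (PhiA_ninf c) => [r| |] // Phi_c _; last by rewrite leNye.
by rewrite -EFinB lee_fin; rewrite lee_fin in Phi_c; lra.
Qed.

Lemma conj_PhiA_proper : proper_fun F.
Proof.
split; first by move=> x; case: (F x) (conj_PhiA_ge_q x).
by have [a Aa] := A_qpos.1; exists a; rewrite conj_PhiA_on // ltey.
Qed.

Lemma Pq_conj_PhiA_min (g : B -> \bar R) : wlsc bf g -> convex_fun g -> proper_fun g ->
  (forall b, ((q b)%:E <= g b)%E) -> A `<=` Pq bf g -> Pq bf F `<=` Pq bf g.
Proof.
move=> g_wlsc g_cvx g_prop g_ge_q A_g b Fb; rewrite /Pq /=.
apply/eqP; rewrite eq_le g_ge_q andbT leNgt; apply/negP => qb_lt.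
have [c [al [minor qb_al]]] := lsc_convex_affine_minorant g_wlsc g_cvx g_prop qb_lt.
have Phi_c : (PhiA bf A c <= al%:E)%E.
  apply: ge_ereal_sup => _ [a Aa <-]; rewrite lee_fin.
  by have := minor a; rewrite (A_g _ Aa) lee_fin (bfC a c); lra.
have := conj_ge (PhiA bf A) c b; rewrite Fb.
case: (PhiA bf A c) Phi_c (PhiA_ninf c) => [p| |] // Phi_c _.
by rewrite -EFinB !lee_fin (bfC c b) in Phi_c *; lra.
Qed.

End PhiA.

End SSDSpace.

Unset Implicit Arguments.
Theorem mainTheorem8 (R : realType) (B : lmodType R) (bf : B -> B -> R)
  (A : set B) :
  SSD_space bf -> q_positive bf A ->
  let P := Pq bf (conj_at bf (PhiA bf A)) in
  [/\ q_representable bf P, A `<=` P &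
      forall C : set B, q_representable bf C -> A `<=` C -> P `<=` C].
Proof.
move=> [_ bf_sym] A_qpos P.
have A_P : A `<=` P by move=> a Aa; exact: conj_PhiA_on.
have F_cvx := conj_convex bf_sym (PhiA_ninf A_qpos).
have F_ge_q := conj_PhiA_ge_q bf_sym A_qpos.
split => //.
- split; first by apply: Pq_q_positive => //; have [a Aa] := A_qpos.1; exists a; exact: A_P.
  exists (conj_at bf (PhiA bf A)); split => //.
    exact: (conj_wlsc bf_sym (PhiA_ninf A_qpos)).
  exact: (conj_PhiA_proper bf_sym A_qpos).
- move=> C [_ [g [g_wlsc g_prop g_cvx g_ge_q <-]]] A_g.
  exact: Pq_conj_PhiA_min.
Qed.
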